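(* Let $i,p,q\ge-1$ and let $v\in C([0,1],L(\mathbb{R}^d,\mathbb{R}^n))$, $w\in C([0,1],\mathbb{R}^d)$. If $p\vee q\le i$, then \[ \|\Delta_i(\Delta_pv\,\Delta_qw)\|_\infty\lesssim 2^{-(i\vee p\vee q)-i+p+q}\|\Delta_pv\|_\infty\|\Delta_qw\|_\infty, \] except when $i=q>p$ or $i=p>q$, in which case one only has $\|\Delta_i(\Delta_pv\,\Delta_qw)\|_\infty\lesssim\|\Delta_pv\|_\infty\|\Delta_qw\|_\infty$. If $p>i$ or $q>i$, then $\Delta_i(\Delta_pv\,\Delta_qw)\equiv0$.
   Context: Index set: pairs $(p,m)$ with either $p=-1,m=0$, or $p\in\mathbb{N}=\{0,1,2,\dots\}$ and $0\le m\le 2^p$. For $p\in\mathbb{N}$, $1\le m\le 2^p$ set $t^0_{pm}=(m-1)2^{-p}$, $t^1_{pm}=(2m-1)2^{-p-1}$, $t^2_{pm}=m2^{-p}$. Rescaled Haar functions: for $p\in\mathbb{N}$, $1\le m\le 2^p$, $\chi_{pm}=2^p$ on $[t^0_{pm},t^1_{pm})$, $=-2^p$ on $[t^1_{pm},t^2_{pm})$, $=0$ elsewhere; $\chi_{00}\equiv1$; $\chi_{p0}\equiv0$ for $p\ge1$. Rescaled Schauder functions: $\varphi_{pm}(t)=\int_0^t\chi_{pm}(s)\,ds$ for $p\in\mathbb{N}$, and $\varphi_{-10}\equiv1$. For continuous $f:[0,1]\to E$ ($E$ a finite-dimensional normed space), coefficients: $f_{-10}=f(0)$, $f_{00}=f(1)-f(0)$,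 $f_{p0}=0$ for $p\ge1$, $f_{pm}=2f(t^1_{pm})-f(t^0_{pm})-f(t^2_{pm})$ for $p\in\mathbb{N},m\ge1$. Schauder blocks: $\Delta_pf=\sum_{m=0}^{2^p}f_{pm}\varphi_{pm}$ for $p\ge-1$. $\|\cdot\|_\infty$ is the sup norm; $a\vee b=\max(a,b)$; $\lesssim$ hides a constant independent of $i,p,q,v,w$. *)

From Stdlib Require Import Reals ZArith.
Open Scope R_scope.

Fixpoint sumR (k : nat) (f : nat -> R) : R :=
  match k with O => 0 | S k' => sumR k' f + f k' end.
Fixpoint maxR (k : nat) (f : nat -> R) : R :=
  match k with O => 0 | S k' => Rmax (maxR k' f) (f k') end.

(* vectors of R^n and linear maps R^d -> R^n (matrices, entry A j k, j<n, k<d) *)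
Definition Vec := nat -> R.
Definition Mat := nat -> nat -> R.

Definition vnorm (n : nat) (x : Vec) : R := maxR n (fun j => Rabs (x j)).
(* operator norm of A : (R^d, max norm) -> (R^n, max norm) = max row sum *)
Definition matnorm (n d : nat) (A : Mat) : R :=
  maxR n (fun j => sumR d (fun k => Rabs (A j k))).
Definition matvec (d : nat) (A : Mat) (x : Vec) : Vec :=
  fun j => sumR d (fun k => A j k * x k).

Definition cont01 (f : R -> R) : Prop :=
  forall t, 0 <= t <= 1 -> limit1_in f (fun x => 0 <= x <= 1) (f t) t.

Definition pow2 (p : Z) : R := powerRZ 2 p.

(* dyadic points, for p >= 0, 1 <= m <= 2^p *)
Definition t0 (p m : Z) : R := IZR (m - 1) * pow2 (- p).
Definition t1 (p m : Z) : R := IZR (2 * m - 1) * pow2 (- p - 1).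
Definition t2 (p m : Z) : R := IZR m * pow2 (- p).

Definition chi (p m : Z) (t : R) : R :=
  if Z.eqb m 0 then (if Z.eqb p 0 then 1 else 0)
  else if Rle_dec (t0 p m) t then
         (if Rlt_dec t (t1 p m) then pow2 p
          else if Rlt_dec t (t2 p m) then - pow2 p else 0)
       else 0.

(* rescaled Schauder functions: phi_{-1,0} = 1 and, for p >= 0,
   phi_pm (t) = int_0^t chi_pm, written in closed form:
   phi_00 t = t, phi_p0 = 0 (p >= 1), and the tent
   2^p * max(0, 2^{-p-1} - |t - t1|) for m >= 1. *)
Definition phi (p m : Z) (t : R) : R :=
  if Z.eqb p (-1) then 1
  else if Z.eqb m 0 then (if Z.eqb p 0 then t else 0)
  else pow2 p * Rmax 0 (pow2 (- p - 1) - Rabs (t - t1 p m)).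

Definition coef (f : R -> R) (p m : Z) : R :=
  if Z.eqb p (-1) then f 0
  else if Z.eqb m 0 then (if Z.eqb p 0 then f 1 - f 0 else 0)
  else 2 * f (t1 p m) - f (t0 p m) - f (t2 p m).

Definition Delta (p : Z) (f : R -> R) (t : R) : R :=
  let N := if Z.eqb p (-1) then 1%nat else S (2 ^ Z.to_nat p)%nat in
  sumR N (fun m => coef f p (Z.of_nat m) * phi p (Z.of_nat m) t).

Definition DeltaV (p : Z) (w : R -> Vec) : R -> Vec :=
  fun t k => Delta p (fun s => w s k) t.
Definition DeltaM (p : Z) (v : R -> Mat) : R -> Mat :=
  fun t j k => Delta p (fun s => v s j k) t.

From Pilot Require Import Defs.
From Stdlib Require Import Reals ZArith Lra Lia Psatz.
Open Scope R_scope.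

(* Write [g = Delta_p v * Delta_q w].  Since at most one tent of level [i] is nonzero at
   any point, [Delta_i g] is bounded by twice the largest level-[i] coefficient of [g], and
   a coefficient is the second difference [2 g(t1) - g(t0) - g(t2)], crudely at most
   [4 sup |g|].  If [p, q < i], the interval [[t0, t2]] of length [2^-i] lies in a cell of
   length [2^(-p-1)] on which [Delta_p v] is affine and in a cell of length [2^(-q-1)] on
   which [Delta_q w] is affine.  The second difference of a product of affine functions is
   [-(increment of the first) * (increment of the second) / 2], and an increment over
   [[t0, t2]] is at most [2^-i / cell length] times the values at the ends of the cell;
   this gives the factor [2^(-2i+p+q)].  If [p > i], then [Delta_p v] vanishes on the
   level-[(i+1)] grid (the feet of the level-[p] tents), which contains every point
   sampled by a level-[i] coefficient, so [Delta_i g = 0]. *)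

Lemma pow2_pos z : 0 < pow2 z.
Proof. unfold pow2; apply powerRZ_lt; lra. Qed.

Lemma pow2_add a b : pow2 (a + b) = pow2 a * pow2 b.
Proof. unfold pow2; apply powerRZ_add; lra. Qed.

Lemma pow2_succ z : pow2 (z + 1) = 2 * pow2 z.
Proof. rewrite pow2_add; unfold pow2; simpl; ring. Qed.

Lemma pow2_opp z : pow2 z * pow2 (- z) = 1.
Proof. rewrite <- pow2_add, Z.add_opp_diag_r; reflexivity. Qed.

Lemma pow2_div a b : pow2 a / pow2 b = pow2 (a - b).
Proof.
  replace (pow2 a) with (pow2 (a - b) * pow2 b) by (rewrite <- pow2_add; f_equal; lia).
  field; apply Rgt_not_eq, pow2_pos.
Qed.

Lemma pow2_IZR e : (0 <= e)%Z -> IZR (2 ^ e) = pow2 e.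
Proof.
  intro He; rewrite <- (Z2Nat.id e He); unfold pow2.
  rewrite <- pow_powerRZ, pow_IZR; reflexivity.
Qed.

Lemma pow2_INR e : (0 <= e)%Z -> INR (2 ^ Z.to_nat e) = pow2 e.
Proof. intro He; rewrite pow_INR; unfold pow2; rewrite pow_powerRZ, Z2Nat.id; auto. Qed.

Definition dyadic (e k : Z) : R := IZR k * pow2 (- e).

Lemma dyadic_refine e f k : (0 <= f)%Z -> dyadic e k = dyadic (e + f) (k * 2 ^ f).
Proof.
  intro Hf; unfold dyadic; rewrite mult_IZR, pow2_IZR, Rmult_assoc, <- pow2_add by auto.
  do 2 f_equal; lia.
Qed.

Lemma t0_dyadic i m : t0 i m = dyadic (i + 1) (2 * (m - 1)).
Proof.
  change (dyadic i (m - 1) = dyadic (i + 1) (2 * (m - 1))); rewrite (dyadic_refine i 1) by lia.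
  now rewrite Z.pow_1_r, Z.mul_comm.
Qed.

Lemma t1_dyadic i m : t1 i m = dyadic (i + 1) (2 * m - 1).
Proof. unfold t1, dyadic; do 2 f_equal; lia. Qed.

Lemma t2_dyadic i m : t2 i m = dyadic (i + 1) (2 * m).
Proof.
  change (dyadic i m = dyadic (i + 1) (2 * m)); rewrite (dyadic_refine i 1) by lia.
  now rewrite Z.pow_1_r, Z.mul_comm.
Qed.

Lemma t1_mid i m : t1 i m = (t0 i m + t2 i m) / 2.
Proof.
  unfold t0, t1, t2.
  replace (pow2 (- i)) with (2 * pow2 (- i - 1)) by (rewrite <- pow2_succ; f_equal; lia).
  rewrite !minus_IZR, mult_IZR; simpl; field.
Qed.

Lemma t2_sub_t0 i m : t2 i m - t0 i m = pow2 (- i).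
Proof. unfold t0, t2; rewrite minus_IZR; ring. Qed.

Lemma t0_t2_in_unit i m : (1 <= m)%Z -> IZR m <= pow2 i -> 0 <= t0 i m /\ t2 i m <= 1.
Proof.
  intros Hm1 Hm2; unfold t0, t2; pose proof (pow2_pos (- i)).
  split.
  - apply Rmult_le_pos; [apply IZR_le; lia | lra].
  - rewrite <- (pow2_opp i); apply Rmult_le_compat_r; lra.
Qed.

Lemma sumR_ext N f g : (forall m, (m < N)%nat -> f m = g m) -> sumR N f = sumR N g.
Proof.
  induction N; intros H; simpl; auto.
  rewrite IHN, H by (auto; lia); reflexivity.
Qed.

Lemma sumR_le N f g : (forall m, (m < N)%nat -> f m <= g m) -> sumR N f <= sumR N g.
Proof.
  induction N; intros H; simpl; [lra|].
  apply Rplus_le_compat; [apply IHN; auto | apply H; lia].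
Qed.

Lemma sumR_zero N f : (forall m, (m < N)%nat -> f m = 0) -> sumR N f = 0.
Proof.
  induction N; intros H; simpl; auto.
  rewrite IHN, H by (auto; lia); ring.
Qed.

Lemma Rabs_sumR_le N f : Rabs (sumR N f) <= sumR N (fun m => Rabs (f m)).
Proof.
  induction N; simpl; [rewrite Rabs_R0; lra|].
  eapply Rle_trans; [apply Rabs_triang | lra].
Qed.

Lemma sumR_plus N f g : sumR N (fun m => f m + g m) = sumR N f + sumR N g.
Proof. induction N; simpl; [|rewrite IHN]; ring. Qed.

Lemma sumR_scal N c f : sumR N (fun m => c * f m) = c * sumR N f.
Proof. induction N; simpl; [|rewrite IHN]; ring. Qed.

Lemma sumR_succ_l N f : sumR (S N) f = f O + sumR N (fun m => f (S m)).
Proof. induction N; simpl in *; [|rewrite IHN]; ring. Qed.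

Lemma sumR_single_support N f : (forall m1 m2, f m1 <> 0 -> f m2 <> 0 -> m1 = m2) ->
  sumR N f = 0 \/ exists m, (m < N)%nat /\ sumR N f = f m.
Proof.
  intro Hf; induction N as [|N IH]; simpl; [auto|].
  destruct (Req_dec (f N) 0) as [E|E].
  - rewrite E, Rplus_0_r; destruct IH as [->|[m [Hm ->]]]; [left | right; exists m]; auto.
  - right; exists N; split; [lia|]; destruct IH as [->|[m [Hm Em]]]; [ring|].
    destruct (Req_dec (f m) 0) as [Z|Z]; [rewrite Em, Z; ring|].
    specialize (Hf N m E Z); lia.
Qed.

Lemma maxR_ge0 N f : 0 <= maxR N f.
Proof. induction N; simpl; [lra|]; eapply Rle_trans; [apply IHN | apply Rmax_l]. Qed.

Lemma le_maxR N f j : (j < N)%nat -> f j <= maxR N f.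
Proof.
  induction N; intros H; [lia|]; simpl.
  destruct (Nat.eq_dec j N) as [->|]; [apply Rmax_r|].
  eapply Rle_trans; [apply IHN; lia | apply Rmax_l].
Qed.

Lemma maxR_le N f B : 0 <= B -> (forall j, (j < N)%nat -> f j <= B) -> maxR N f <= B.
Proof.
  induction N; intros HB H; simpl; auto.
  apply Rmax_lub; [apply IHN | apply H]; auto.
Qed.

Lemma phi_tent i m t : (0 <= i)%Z -> m <> 0%Z ->
  phi i m t = pow2 i * Rmax 0 (pow2 (- i - 1) - Rabs (t - t1 i m)).
Proof.
  intros Hi Hm; unfold phi.
  replace (i =? -1)%Z with false by (symmetry; apply Z.eqb_neq; lia).
  replace (m =? 0)%Z with false by (symmetry; apply Z.eqb_neq; lia).
  reflexivity.
Qed.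

Lemma phi_tent_bound i m t : (0 <= i)%Z -> m <> 0%Z -> 0 <= phi i m t <= / 2.
Proof.
  intros Hi Hm; rewrite phi_tent by auto.
  pose proof (pow2_pos i); pose proof (Rabs_pos (t - t1 i m)).
  assert (E : pow2 i * pow2 (- i - 1) = / 2).
  { rewrite <- pow2_add; replace (i + (- i - 1))%Z with (-1)%Z by lia.
    unfold pow2; simpl; lra. }
  split; [apply Rmult_le_pos; [lra | apply Rmax_l]|].
  rewrite <- E; apply Rmult_le_compat_l; [lra|].
  apply Rmax_lub; [apply Rlt_le, pow2_pos | lra].
Qed.

Lemma phi_tent_support i m t : (0 <= i)%Z -> m <> 0%Z -> phi i m t <> 0 ->
  Rabs (t - t1 i m) < pow2 (- i - 1).
Proof.
  intros Hi Hm; rewrite phi_tent by auto; intro E.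
  destruct (Rlt_le_dec (Rabs (t - t1 i m)) (pow2 (- i - 1))) as [|C]; auto.
  rewrite Rmax_left in E by lra; lra.
Qed.

Lemma phi_tent_disjoint i m1 m2 t : (0 <= i)%Z -> m1 <> 0%Z -> m2 <> 0%Z ->
  phi i m1 t <> 0 -> phi i m2 t <> 0 -> m1 = m2.
Proof.
  intros Hi H1 H2 E1 E2.
  apply phi_tent_support in E1, E2; auto.
  destruct (Z.eq_dec m1 m2) as [|Hne]; auto; exfalso.
  pose proof (pow2_pos (- i - 1)); set (h := pow2 (- i - 1)) in *.
  assert (Gap : 2 <= Rabs (IZR (2 * (m1 - m2)))).
  { rewrite <- abs_IZR; apply IZR_le; lia. }
  assert (D : t1 i m1 - t1 i m2 = IZR (2 * (m1 - m2)) * h).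
  { unfold t1, h; rewrite <- Rmult_minus_distr_r, <- minus_IZR; do 2 f_equal; lia. }
  assert (Close : Rabs (t1 i m1 - t1 i m2) < 2 * h).
  { replace (t1 i m1 - t1 i m2) with ((t - t1 i m2) - (t - t1 i m1)) by ring.
    eapply Rle_lt_trans; [apply Rabs_triang|]; rewrite Rabs_Ropp; lra. }
  rewrite D, Rabs_mult, (Rabs_right h) in Close by lra; nra.
Qed.

Lemma phi_tent_dyadic p m k : (0 <= p)%Z -> m <> 0%Z -> phi p m (dyadic p k) = 0.
Proof.
  intros Hp Hm; rewrite phi_tent by auto.
  pose proof (pow2_pos (- p - 1)); set (h := pow2 (- p - 1)) in *.
  replace (dyadic p k - t1 p m) with (IZR (2 * k - 2 * m + 1) * h).
  2:{ unfold dyadic, t1; fold h.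
      replace (pow2 (- p)) with (2 * h) by (unfold h; rewrite <- pow2_succ; f_equal; lia).
      rewrite plus_IZR, !minus_IZR, !mult_IZR; simpl; ring. }
  assert (1 <= Rabs (IZR (2 * k - 2 * m + 1))) by (rewrite <- abs_IZR; apply IZR_le; lia).
  rewrite Rabs_mult, (Rabs_right h), Rmax_left by nra; ring.
Qed.

Lemma Delta_m1 F s : Defs.Delta (-1) F s = F 0.
Proof. unfold Defs.Delta, phi, coef; simpl; ring. Qed.

Lemma Delta_eq_sumR i f t : (0 <= i)%Z ->
  Defs.Delta i f t
    = sumR (S (2 ^ Z.to_nat i)) (fun m => coef f i (Z.of_nat m) * phi i (Z.of_nat m) t).
Proof.
  intro Hi; unfold Defs.Delta.
  replace (i =? -1)%Z with false by (symmetry; apply Z.eqb_neq; lia); reflexivity.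
Qed.

Lemma Delta_eq0_of_coef_eq0 i f t : (forall m, coef f i m = 0) -> Defs.Delta i f t = 0.
Proof. intro H; unfold Defs.Delta; apply sumR_zero; intros m _; rewrite H; ring. Qed.

(* At most one tent of level [i] is nonzero at [t], and tents are bounded by 1/2. *)
Lemma Rabs_Delta_le i f K t : (-1 <= i)%Z -> 0 <= t <= 1 -> 0 <= K ->
  (forall m, (0 <= m)%Z -> IZR m <= pow2 i -> Rabs (coef f i m) <= K) ->
  Rabs (Defs.Delta i f t) <= 2 * K.
Proof.
  intros Hi Ht HK H.
  destruct (Z.eq_dec i (-1)) as [->|Hi'].
  { rewrite Delta_m1; replace (f 0) with (coef f (-1) 0) by reflexivity.
    specialize (H 0%Z (Z.le_refl 0)); pose proof (pow2_pos (-1)); lra. }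
  rewrite Delta_eq_sumR by lia.
  eapply Rle_trans; [apply Rabs_sumR_le|].
  eapply Rle_trans; [apply (sumR_le _ _ (fun m => K * Rabs (phi i (Z.of_nat m) t)))|].
  { intros m Hm; rewrite Rabs_mult; apply Rmult_le_compat_r; [apply Rabs_pos|].
    apply H; [lia|]; rewrite <- INR_IZR_INZ, <- pow2_INR by lia; apply le_INR; lia. }
  rewrite sumR_scal, sumR_succ_l, (Rmult_comm 2); apply Rmult_le_compat_l; auto.
  assert (Rabs (phi i 0 t) <= 1).
  { unfold phi; replace (i =? -1)%Z with false by (symmetry; apply Z.eqb_neq; lia).
    simpl; destruct (i =? 0)%Z; rewrite ?Rabs_R0, ?Rabs_right; lra. }
  set (tents := fun m => Rabs (phi i (Z.of_nat (S m)) t)).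
  assert (Tb : forall m, 0 <= tents m <= / 2).
  { intro m; unfold tents; pose proof (phi_tent_bound i (Z.of_nat (S m)) t ltac:(lia) ltac:(lia)).
    rewrite Rabs_right; lra. }
  destruct (sumR_single_support (2 ^ Z.to_nat i) tents) as [->|[m [_ ->]]].
  - intros m1 m2 E1 E2; unfold tents in E1, E2; rewrite <- Rabs_R0 in E1, E2.
    assert (Z.of_nat (S m1) = Z.of_nat (S m2)); [|lia].
    apply (phi_tent_disjoint i _ _ t); try lia; intro C; [apply E1 | apply E2]; now rewrite C.
  - simpl; lra.
  - pose proof (Tb m); simpl; lra.
Qed.

Definition second_diff (f : R -> R) (a c : R) : R := 2 * f ((a + c) / 2) - f a - f c.

Lemma coef_second_diff f i m : (0 <= i)%Z -> m <> 0%Z ->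
  coef f i m = second_diff f (t0 i m) (t2 i m).
Proof.
  intros Hi Hm; unfold coef, second_diff; rewrite <- t1_mid.
  replace (i =? -1)%Z with false by (symmetry; apply Z.eqb_neq; lia).
  replace (m =? 0)%Z with false by (symmetry; apply Z.eqb_neq; lia).
  reflexivity.
Qed.

Lemma Rabs_second_diff_le f a c K : a <= c ->
  (forall s, a <= s <= c -> Rabs (f s) <= K) -> Rabs (second_diff f a c) <= 4 * K.
Proof.
  intros Hac H; unfold second_diff.
  pose proof (H a ltac:(lra)); pose proof (H c ltac:(lra)); pose proof (H ((a + c) / 2) ltac:(lra)).
  unfold Rminus; eapply Rle_trans; [apply Rabs_triang|].
  eapply Rle_trans; [apply Rplus_le_compat_r, Rabs_triang|].
  rewrite !Rabs_Ropp, Rabs_mult, (Rabs_right 2) by lra; lra.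
Qed.

Lemma Rabs_coef_le f i m K : (-1 <= i)%Z -> (0 <= m)%Z -> IZR m <= pow2 i ->
  (forall s, 0 <= s <= 1 -> Rabs (f s) <= K) -> Rabs (coef f i m) <= 4 * K.
Proof.
  intros Hi Hm0 Hm H.
  pose proof (H 0 ltac:(lra)); pose proof (H 1 ltac:(lra)); pose proof (Rabs_pos (f 0)).
  destruct (Z.eq_dec m 0) as [->|Hm1].
  - unfold coef; destruct (i =? -1)%Z; [lra|]; simpl; destruct (i =? 0)%Z; [|rewrite Rabs_R0; lra].
    unfold Rminus; eapply Rle_trans; [apply Rabs_triang|]; rewrite Rabs_Ropp; lra.
  - assert (Hi0 : (0 <= i)%Z).
    { destruct (Z.eq_dec i (-1)) as [->|]; [|lia].
      assert (1 <= IZR m) by (apply IZR_le; lia); unfold pow2 in Hm; simpl in Hm; lra. }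
    rewrite coef_second_diff by auto.
    destruct (t0_t2_in_unit i m ltac:(lia) Hm).
    pose proof (t2_sub_t0 i m); pose proof (pow2_pos (- i)).
    apply Rabs_second_diff_le; [lra|]; intros s Hs; apply H; lra.
Qed.

Lemma Rabs_Delta_le_sup i f K t : (-1 <= i)%Z -> 0 <= t <= 1 ->
  (forall s, 0 <= s <= 1 -> Rabs (f s) <= K) -> Rabs (Defs.Delta i f t) <= 8 * K.
Proof.
  intros Hi Ht H; pose proof (H 0 ltac:(lra)); pose proof (Rabs_pos (f 0)).
  replace (8 * K) with (2 * (4 * K)) by ring.
  apply Rabs_Delta_le; [auto | auto | lra | intros m Hm0 Hm; apply Rabs_coef_le; auto].
Qed.

(* The points at which [coef f i _] samples [f]. *)
Definition sample_point (i : Z) (s : R) : Prop :=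
  s = 0 \/ (0 <= i)%Z /\ exists k, s = dyadic (i + 1) k.

Lemma coef_eq0_of_vanish f i m : (-1 <= i)%Z ->
  (forall s, sample_point i s -> f s = 0) -> coef f i m = 0.
Proof.
  intros Hi H; assert (H0 : f 0 = 0) by (apply H; left; reflexivity).
  unfold coef; destruct (Z.eqb_spec i (-1)); [auto|].
  assert (Hk : forall k, f (dyadic (i + 1) k) = 0)
    by (intro k; apply H; right; split; [lia | eauto]).
  destruct (Z.eqb_spec m 0); [destruct (Z.eqb_spec i 0) as [->|]; [|ring]|].
  - replace 1 with (dyadic (0 + 1) 2) by (unfold dyadic, pow2; simpl; field).
    rewrite Hk, H0; ring.
  - rewrite (t0_dyadic i m), (t1_dyadic i m), (t2_dyadic i m), !Hk; ring.
Qed.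

Lemma Delta_dyadic_eq0 p k F : (0 <= p)%Z -> (1 <= p \/ k = 0)%Z ->
  Defs.Delta p F (dyadic p k) = 0.
Proof.
  intros Hp Hpk; rewrite Delta_eq_sumR by auto; apply sumR_zero; intros m _.
  destruct (Nat.eq_dec m 0) as [->|Hm]; [|rewrite phi_tent_dyadic by lia; ring].
  unfold phi; replace (p =? -1)%Z with false by (symmetry; apply Z.eqb_neq; lia); simpl.
  destruct (Z.eqb_spec p 0); [|ring].
  replace k with 0%Z by lia; unfold dyadic; ring.
Qed.

Lemma Delta_eq0_at_sample_point p i F s : (-1 <= i)%Z -> (i < p)%Z ->
  sample_point i s -> Defs.Delta p F s = 0.
Proof.
  intros Hi Hip [->|[Hi0 [k ->]]].
  - pose proof (Delta_dyadic_eq0 p 0 F) as E; unfold dyadic in E; rewrite Rmult_0_l in E.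
    apply E; lia.
  - rewrite (dyadic_refine (i + 1) (p - i - 1)) by lia.
    replace (i + 1 + (p - i - 1))%Z with p by lia; apply Delta_dyadic_eq0; lia.
Qed.

Definition affine_on (f : R -> R) (a b : R) : Prop :=
  exists A B, forall s, a <= s <= b -> f s = A * s + B.

Lemma affine_on_sub f al be a c : al <= a -> c <= be -> affine_on f al be -> affine_on f a c.
Proof. intros Ha Hc [A [B H]]; exists A, B; intros s Hs; apply H; lra. Qed.

Lemma affine_on_sumR N F a b : (forall m, (m < N)%nat -> affine_on (F m) a b) ->
  affine_on (fun s => sumR N (fun m => F m s)) a b.
Proof.
  induction N; intro H; [exists 0, 0; intros; simpl; ring|].
  destruct IHN as [A [B HAB]]; [intros; apply H; lia|].
  destruct (H N ltac:(lia)) as [A' [B' HAB']].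
  exists (A + A'), (B + B'); intros s Hs; simpl; rewrite HAB, HAB' by auto; ring.
Qed.

Lemma affine_on_scal c f a b : affine_on f a b -> affine_on (fun s => c * f s) a b.
Proof. intros [A [B H]]; exists (c * A), (c * B); intros s Hs; rewrite H by auto; ring. Qed.

(* The cells of the level-[p + 1] grid avoid the peaks and the feet of the level-[p] tents. *)
Lemma phi_affine_on p m k : (-1 <= p)%Z ->
  affine_on (phi p m) (dyadic (p + 1) k) (dyadic (p + 1) (k + 1)).
Proof.
  intro Hp; unfold phi.
  destruct (Z.eqb_spec p (-1)); [exists 0, 1; intros; ring|].
  destruct (Z.eqb_spec m 0); [destruct (p =? 0)%Z; [exists 1, 0 | exists 0, 0]; intros; ring|].
  unfold dyadic, t1; replace (- (p + 1))%Z with (- p - 1)%Z by lia.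
  pose proof (pow2_pos (- p - 1)); set (h := pow2 (- p - 1)).
  set (z := (k - (2 * m - 1))%Z).
  replace (IZR (k + 1)) with (IZR (2 * m - 1) + IZR z + 1)
    by (unfold z; rewrite <- !plus_IZR; f_equal; lia).
  replace (IZR k) with (IZR (2 * m - 1) + IZR z)
    by (unfold z; rewrite <- !plus_IZR; f_equal; lia).
  set (u := IZR (2 * m - 1)).
  destruct (Z_lt_le_dec z (-1)) as [C|C];
    [|destruct (Z.eq_dec z (-1)) as [C'|C']; [|destruct (Z.eq_dec z 0) as [C''|C'']]].
  - assert (IZR z <= -2) by (apply IZR_le; lia).
    exists 0, 0; intros s Hs; rewrite Rabs_left1, Rmax_left by nra; ring.
  - rewrite C' in *; exists (pow2 p), (pow2 p * (h - u * h)); intros s Hs.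
    rewrite Rabs_left1, Rmax_right by nra; ring.
  - rewrite C'' in *; exists (- pow2 p), (pow2 p * (h + u * h)); intros s Hs.
    rewrite Rabs_right, Rmax_right by nra; ring.
  - assert (1 <= IZR z) by (apply IZR_le; lia).
    exists 0, 0; intros s Hs; rewrite Rabs_right, Rmax_left by nra; ring.
Qed.

Lemma Delta_affine_on p F k : (-1 <= p)%Z ->
  affine_on (Defs.Delta p F) (dyadic (p + 1) k) (dyadic (p + 1) (k + 1)).
Proof.
  intro Hp; unfold Defs.Delta; cbv zeta.
  apply (affine_on_sumR _ (fun m s => coef F p (Z.of_nat m) * phi p (Z.of_nat m) s)).
  intros m _; apply affine_on_scal, phi_affine_on, Hp.
Qed.

Lemma Rdiv_ge0 a b : 0 <= a -> 0 < b -> 0 <= a / b.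
Proof. intros; apply Rmult_le_pos; [lra | apply Rlt_le, Rinv_0_lt_compat; lra]. Qed.

Lemma affine_increment_le f al be a c :
  affine_on f al be -> al < be -> al <= a -> a <= c -> c <= be ->
  Rabs (f c - f a) <= (c - a) / (be - al) * (Rabs (f al) + Rabs (f be)).
Proof.
  intros [A [B H]] Hab Ha Hac Hc.
  replace (f c - f a) with ((c - a) / (be - al) * (f be - f al)) by (rewrite !H by lra; field; lra).
  rewrite Rabs_mult, (Rabs_right ((c - a) / (be - al))) by (apply Rle_ge, Rdiv_ge0; lra).
  apply Rmult_le_compat_l; [apply Rdiv_ge0; lra|].
  unfold Rminus; eapply Rle_trans; [apply Rabs_triang|]; rewrite Rabs_Ropp; lra.
Qed.

Lemma second_diff_affine_mul f g a c : affine_on f a c -> affine_on g a c -> a <= c ->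
  second_diff (fun s => f s * g s) a c = - ((f c - f a) * (g c - g a)) / 2.
Proof.
  intros [A [B Hf]] [A' [B' Hg]] Hac; unfold second_diff.
  rewrite !Hf, !Hg by lra; field.
Qed.

Lemma Rabs_second_diff_mul_le f g a c al be al' be' :
  affine_on f al be -> affine_on g al' be' -> al < be -> al' < be' ->
  al <= a -> al' <= a -> a <= c -> c <= be -> c <= be' ->
  Rabs (second_diff (fun s => f s * g s) a c)
    <= (c - a) / (be - al) * (Rabs (f al) + Rabs (f be))
       * ((c - a) / (be' - al') * (Rabs (g al') + Rabs (g be'))) / 2.
Proof.
  intros Hf Hg Hab Hab' Ha Ha' Hac Hc Hc'.
  rewrite second_diff_affine_mul;
    [| apply (affine_on_sub f al be) | apply (affine_on_sub g al' be') | ]; auto.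
  unfold Rdiv at 1 4; rewrite Rabs_mult, Rabs_Ropp, Rabs_mult, (Rabs_right (/ 2)) by lra.
  apply Rmult_le_compat_r; [lra|].
  apply Rmult_le_compat; try apply Rabs_pos; eapply affine_increment_le; eauto.
Qed.

Lemma second_diff_sumR N F a c :
  second_diff (fun s => sumR N (fun k => F k s)) a c = sumR N (fun k => second_diff (F k) a c).
Proof. unfold second_diff; induction N; simpl; [|rewrite <- IHN]; ring. Qed.

Lemma Rabs_second_diff_sumR_mul_le d (V W : nat -> R -> R) a c al be al' be' Mv Mw :
  (forall k, (k < d)%nat -> affine_on (V k) al be) ->
  (forall k, (k < d)%nat -> affine_on (W k) al' be') -> al < be -> al' < be' ->
  al <= a -> al' <= a -> a <= c -> c <= be -> c <= be' ->
  sumR d (fun k => Rabs (V k al)) <= Mv -> sumR d (fun k => Rabs (V k be)) <= Mv ->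
  0 <= Mw -> (forall k, (k < d)%nat -> Rabs (W k al') <= Mw /\ Rabs (W k be') <= Mw) ->
  Rabs (second_diff (fun s => sumR d (fun k => V k s * W k s)) a c)
    <= 2 * Mv * Mw * ((c - a) / (be - al)) * ((c - a) / (be' - al')).
Proof.
  intros HV HW Hab Hab' Ha Ha' Hac Hc Hc' HVal HVbe HMw HWb.
  set (r := (c - a) / (be - al)); set (r' := (c - a) / (be' - al')).
  assert (r_ge0 : 0 <= r) by (apply Rdiv_ge0; lra).
  assert (r'_ge0 : 0 <= r') by (apply Rdiv_ge0; lra).
  rewrite second_diff_sumR; eapply Rle_trans; [apply Rabs_sumR_le|].
  eapply Rle_trans;
    [apply (sumR_le _ _ (fun k => r * r' * Mw * (Rabs (V k al) + Rabs (V k be))))|].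
  - intros k Hk; eapply Rle_trans; [eapply Rabs_second_diff_mul_le; eauto|].
    destruct (HWb k Hk); pose proof (Rabs_pos (V k al)); pose proof (Rabs_pos (V k be)).
    fold r r'; apply Rle_trans with (r * (Rabs (V k al) + Rabs (V k be)) * (r' * (2 * Mw)) / 2).
    + apply Rmult_le_compat_r; [lra|]; apply Rmult_le_compat_l; [nra|].
      apply Rmult_le_compat_l; lra.
    + right; field.
  - rewrite sumR_scal, sumR_plus.
    apply Rle_trans with (r * r' * Mw * (Mv + Mv)); [|right; ring].
    apply Rmult_le_compat_l; [|lra].
    apply Rmult_le_pos; [apply Rmult_le_pos|]; auto.
Qed.

Lemma dyadic_le e k1 k2 : (k1 <= k2)%Z -> dyadic e k1 <= dyadic e k2.
Proof.
  intro Hk; unfold dyadic; apply Rmult_le_compat_r; [apply Rlt_le, pow2_pos | apply IZR_le, Hk].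
Qed.

Lemma dyadic_succ_sub e k : dyadic e (k + 1) - dyadic e k = pow2 (- e).
Proof. unfold dyadic; rewrite plus_IZR; ring. Qed.

Lemma dyadic_cover e i m : (0 <= e <= i)%Z -> (1 <= m <= 2 ^ i)%Z ->
  exists k, 0 <= dyadic e k /\ dyadic e k <= t0 i m /\
            t2 i m <= dyadic e (k + 1) /\ dyadic e (k + 1) <= 1.
Proof.
  intros He Hm.
  set (N := (2 ^ (i - e))%Z); assert (HN : (0 < N)%Z) by (apply Z.pow_pos_nonneg; lia).
  assert (E : (2 ^ i = 2 ^ e * N)%Z) by (unfold N; rewrite <- Z.pow_add_r by lia; f_equal; lia).
  pose proof (Z.div_mod (m - 1) N ltac:(lia)); pose proof (Z.mod_pos_bound (m - 1) N HN).
  pose proof (Z.div_pos (m - 1) N ltac:(lia) HN).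
  set (k := ((m - 1) / N)%Z) in *; set (r := ((m - 1) mod N)%Z) in *; exists k.
  assert (Hk : (k * N <= m - 1 < (k + 1) * N)%Z) by nia.
  assert (Hk1 : ((k + 1) * N <= 2 ^ i)%Z).
  { assert (k < 2 ^ e)%Z by (apply (Z.mul_lt_mono_pos_r N); lia).
    rewrite E; apply Z.mul_le_mono_nonneg_r; lia. }
  assert (Refine : forall z, dyadic e z = dyadic i (z * N)).
  { intro z; rewrite (dyadic_refine e (i - e)) by lia; do 2 f_equal; lia. }
  replace 1 with (dyadic i (2 ^ i))
    by (unfold dyadic; rewrite pow2_IZR, pow2_opp by lia; reflexivity).
  change (t0 i m) with (dyadic i (m - 1)); change (t2 i m) with (dyadic i m).
  rewrite !Refine; repeat split; [replace 0 with (dyadic i 0) by (unfold dyadic; ring)|..];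
    apply dyadic_le; nia.
Qed.

Lemma pow2_cell_ratio_product i p q :
  2 * (pow2 (- i) / pow2 (- (p + 1))) * (pow2 (- i) / pow2 (- (q + 1)))
    = 8 * pow2 (- 2 * i + p + q).
Proof.
  rewrite !pow2_div, Rmult_assoc, <- pow2_add.
  replace (- i - - (p + 1) + (- i - - (q + 1)))%Z with (2 + (- 2 * i + p + q))%Z by lia.
  rewrite pow2_add; unfold pow2 at 1; simpl; ring.
Qed.

Lemma Rabs_coef_sumR_Delta_mul_le d i p q m (V W : nat -> R -> R) Mv Mw :
  (-1 <= p)%Z -> (-1 <= q)%Z -> (p < i)%Z -> (q < i)%Z -> (0 <= m)%Z -> IZR m <= pow2 i ->
  0 <= Mv -> 0 <= Mw ->
  (forall s, 0 <= s <= 1 -> sumR d (fun k => Rabs (Defs.Delta p (V k) s)) <= Mv) ->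
  (forall s k, 0 <= s <= 1 -> (k < d)%nat -> Rabs (Defs.Delta q (W k) s) <= Mw) ->
  Rabs (coef (fun s => sumR d (fun k => Defs.Delta p (V k) s * Defs.Delta q (W k) s)) i m)
    <= 8 * pow2 (- 2 * i + p + q) * Mv * Mw.
Proof.
  intros Hp Hq Hpi Hqi Hm0 Hm HMv HMw HV HW.
  assert (Bound_ge0 : 0 <= 8 * pow2 (- 2 * i + p + q) * Mv * Mw)
    by (pose proof (pow2_pos (- 2 * i + p + q)); apply Rmult_le_pos; [|auto]; nra).
  destruct (Z.eq_dec m 0) as [->|Hm1].
  { unfold coef; replace (i =? -1)%Z with false by (symmetry; apply Z.eqb_neq; lia).
    rewrite Z.eqb_refl; destruct (Z.eqb_spec i 0); [|rewrite Rabs_R0; auto].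
    assert (p = -1)%Z by lia; assert (q = -1)%Z by lia; subst p q.
    rewrite (sumR_ext _ _ _ (fun k _ => f_equal2 Rmult (Delta_m1 (V k) 1) (Delta_m1 (W k) 1))).
    rewrite (sumR_ext _ _ _ (fun k _ => f_equal2 Rmult (Delta_m1 (V k) 0) (Delta_m1 (W k) 0))).
    rewrite Rminus_diag, Rabs_R0; auto. }
  assert (Hi : (0 <= i)%Z) by lia.
  assert (Hmi : (1 <= m <= 2 ^ i)%Z) by (split; [lia | apply le_IZR; rewrite pow2_IZR; auto]).
  destruct (dyadic_cover (p + 1) i m ltac:(lia) Hmi) as [k1 [A0 [A1 [A2 A3]]]].
  destruct (dyadic_cover (q + 1) i m ltac:(lia) Hmi) as [k2 [B0 [B1 [B2 B3]]]].
  pose proof (dyadic_succ_sub (p + 1) k1) as Lp; pose proof (dyadic_succ_sub (q + 1) k2) as Lq.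
  pose proof (t2_sub_t0 i m) as Lc.
  pose proof (pow2_pos (- (p + 1))); pose proof (pow2_pos (- (q + 1))); pose proof (pow2_pos (- i)).
  rewrite coef_second_diff by auto.
  eapply Rle_trans; [apply Rabs_second_diff_sumR_mul_le with
    (al := dyadic (p + 1) k1) (be := dyadic (p + 1) (k1 + 1))
    (al' := dyadic (q + 1) k2) (be' := dyadic (q + 1) (k2 + 1)) (Mv := Mv) (Mw := Mw);
    auto; try lra|].
  - intros k _; apply Delta_affine_on, Hp.
  - intros k _; apply Delta_affine_on, Hq.
  - apply HV; lra.
  - apply HV; lra.
  - intros k Hk; split; apply HW; auto; lra.
  - right; rewrite Lp, Lq, Lc, <- (pow2_cell_ratio_product i p q); ring.
Qed.

Lemma Rabs_le_vnorm d x k : (k < d)%nat -> Rabs (x k) <= vnorm d x.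
Proof. apply (le_maxR d (fun k => Rabs (x k))). Qed.

Lemma vnorm_le n x B : 0 <= B -> (forall j, (j < n)%nat -> Rabs (x j) <= B) -> vnorm n x <= B.
Proof. apply maxR_le. Qed.

Lemma row_sum_le_matnorm n d A j : (j < n)%nat ->
  sumR d (fun k => Rabs (A j k)) <= matnorm n d A.
Proof. apply (le_maxR n (fun j => sumR d (fun k => Rabs (A j k)))). Qed.

Lemma Rabs_matvec_le n d A x j : (j < n)%nat ->
  Rabs (matvec d A x j) <= matnorm n d A * vnorm d x.
Proof.
  intro Hj; unfold matvec; eapply Rle_trans; [apply Rabs_sumR_le|].
  eapply Rle_trans; [apply (sumR_le _ _ (fun k => Rabs (A j k) * vnorm d x))|].
  - intros k Hk; rewrite Rabs_mult.
    apply Rmult_le_compat_l; [apply Rabs_pos | apply Rabs_le_vnorm, Hk].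
  - rewrite (sumR_ext _ _ (fun k => vnorm d x * Rabs (A j k))) by (intros; ring).
    rewrite sumR_scal, Rmult_comm; apply Rmult_le_compat_r; [apply maxR_ge0|].
    apply row_sum_le_matnorm, Hj.
Qed.

Section Product.

Variables (d n : nat) (p q : Z) (v : R -> Mat) (w : R -> Vec) (Mv Mw : R).
Hypothesis Hp : (-1 <= p)%Z.
Hypothesis Hq : (-1 <= q)%Z.
Hypothesis HMv : forall t, 0 <= t <= 1 -> matnorm n d (DeltaM p v t) <= Mv.
Hypothesis HMw : forall t, 0 <= t <= 1 -> vnorm d (DeltaV q w t) <= Mw.

Let g : R -> Vec := fun s => matvec d (DeltaM p v s) (DeltaV q w s).

Lemma Mv_ge0 : 0 <= Mv.
Proof. apply (Rle_trans _ (matnorm n d (DeltaM p v 0))); [apply maxR_ge0 | apply HMv; lra]. Qed.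

Lemma Mw_ge0 : 0 <= Mw.
Proof. apply (Rle_trans _ (vnorm d (DeltaV q w 0))); [apply maxR_ge0 | apply HMw; lra]. Qed.

Lemma vnorm_Delta_product_le i t : (-1 <= i)%Z -> 0 <= t <= 1 ->
  vnorm n (DeltaV i g t) <= 8 * (Mv * Mw).
Proof.
  intros Hi Ht; pose proof Mv_ge0; pose proof Mw_ge0.
  apply vnorm_le; [nra|]; intros j Hj; apply Rabs_Delta_le_sup; auto.
  intros s Hs; eapply Rle_trans; [apply Rabs_matvec_le, Hj|].
  apply Rmult_le_compat; [apply maxR_ge0 | apply maxR_ge0 | apply HMv, Hs | apply HMw, Hs].
Qed.

Lemma vnorm_Delta_product_le_pow2 i t : (p < i)%Z -> (q < i)%Z -> 0 <= t <= 1 ->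
  vnorm n (DeltaV i g t) <= 16 * pow2 (- 2 * i + p + q) * Mv * Mw.
Proof.
  intros Hpi Hqi Ht; pose proof Mv_ge0; pose proof Mw_ge0; pose proof (pow2_pos (- 2 * i + p + q)).
  apply vnorm_le; [apply Rmult_le_pos; nra|]; intros j Hj.
  replace (16 * pow2 (- 2 * i + p + q) * Mv * Mw)
    with (2 * (8 * pow2 (- 2 * i + p + q) * Mv * Mw)) by ring.
  apply Rabs_Delta_le; [lia | auto | apply Rmult_le_pos; nra |]; intros m Hm0 Hm.
  apply Rabs_coef_sumR_Delta_mul_le; auto.
  - intros s Hs; apply (Rle_trans _ _ _ (row_sum_le_matnorm n d (DeltaM p v s) j Hj)), HMv, Hs.
  - intros s k Hs Hk; apply (Rle_trans _ _ _ (Rabs_le_vnorm d (DeltaV q w s) k Hk)), HMw, Hs.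
Qed.

Lemma DeltaV_product_eq0 i t j : (-1 <= i)%Z -> (i < p \/ i < q)%Z -> DeltaV i g t j = 0.
Proof.
  intros Hi Hiq; apply Delta_eq0_of_coef_eq0; intro m.
  apply coef_eq0_of_vanish; auto; intros s Hs.
  apply sumR_zero; intros k _.
  destruct Hiq; [unfold DeltaM | unfold DeltaV];
    rewrite Delta_eq0_at_sample_point with (i := i) by auto; ring.
Qed.

End Product.

Theorem mainTheorem6 :
  forall d n : nat, exists C : R, 0 < C /\
  forall (i p q : Z) (v : R -> Mat) (w : R -> Vec),
    (-1 <= i)%Z -> (-1 <= p)%Z -> (-1 <= q)%Z ->
    (forall j k, (j < n)%nat -> (k < d)%nat -> cont01 (fun s => v s j k)) ->
    (forall k, (k < d)%nat -> cont01 (fun s => w s k)) ->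
    forall Mv Mw : R,
    (forall t, 0 <= t <= 1 -> matnorm n d (DeltaM p v t) <= Mv) ->
    (forall t, 0 <= t <= 1 -> vnorm d (DeltaV q w t) <= Mw) ->
    let g : R -> Vec := fun s => matvec d (DeltaM p v s) (DeltaV q w s) in
    forall t, 0 <= t <= 1 ->
      ((Z.max p q <= i)%Z ->
       ~ ((i = q /\ (q > p)%Z) \/ (i = p /\ (p > q)%Z)) ->
       vnorm n (DeltaV i g t)
         <= C * pow2 (- Z.max i (Z.max p q) - i + p + q) * Mv * Mw)
   /\ (((i = q /\ (q > p)%Z) \/ (i = p /\ (p > q)%Z)) ->
       vnorm n (DeltaV i g t) <= C * Mv * Mw)
   /\ (((p > i)%Z \/ (q > i)%Z) ->
       forall j, (j < n)%nat -> DeltaV i g t j = 0).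
Proof.
  intros d n; exists 16; split; [lra|].
  intros i p q v w Hi Hp Hq _ _ Mv Mw HMv HMw g t Ht.
  pose proof (Mv_ge0 d n p v Mv HMv); pose proof (Mw_ge0 d q w Mw HMw).
  assert (Crude : vnorm n (DeltaV i g t) <= 8 * (Mv * Mw))
    by exact (vnorm_Delta_product_le d n p q v w Mv Mw HMv HMw i t Hi Ht).
  split; [|split].
  - intros Hmax Hexc; destruct (Z_lt_le_dec p i), (Z_lt_le_dec q i).
    1: replace (- Z.max i (Z.max p q) - i + p + q)%Z with (- 2 * i + p + q)%Z by lia;
       apply vnorm_Delta_product_le_pow2; auto.
    (* outside the exceptional cases, [p = q = i] *)
    all: replace (- Z.max i (Z.max p q) - i + p + q)%Z with 0%Z by lia;
         change (pow2 0) with 1; nra.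
  - intros _; nra.
  - intros Hgt j _; apply DeltaV_product_eq0; auto; lia.
Qed.
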